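(* Let $\mathcal{M}$ be a complete Riemannian submanifold of $\mathbb{R}^n$ with the induced Riemannian metric, let $f:\mathbb{R}^n\to\mathbb{R}$ be a proper lower semicontinuous function, and let $\tilde f$ be any smoothing function of $f$. If $x^*\in\mathcal{M}$ is a local minimizer of $f$ on $\mathcal{M}$, then $x^*$ is a stationary point of $f$ associated with $\tilde f$ on $\mathcal{M}$, i.e. \[ \liminf_{x\to x^*,\ x\in\mathcal{M},\ \mu\downarrow 0}\|\operatorname{grad}\tilde f(x,\mu)\|=0 . \]
   Context: A function $\tilde f:\mathbb{R}^n\times\mathbb{R}_+\to\mathbb{R}$ is a smoothing function of $f$ if $\tilde f(\cdot,\mu)$ is continuously differentiable on $\mathbb{R}^n$ for every $\mu>0$, $\lim_{z\to x,\mu\downarrow0}\tilde f(z,\mu)=f(x)$ for every $x$, and there exist a constant $\kappa>0$ and a function $\omega:(0,\infty)\to(0,\infty)$ with $\lim_{\mu\downarrow0}\omega(\mu)=0$ such that $|\tilde f(x,\mu)-f(x)|\le\kappa\,\omega(\mu)$ for all $x$ and $\mu>0$. Here $\operatorname{grad}\tilde f(x,\mu)$ denotes the Riemannian gradient of $\tilde f(\cdot,\mu)$ at $x\in\mathcal{M}$, which equals $\operatorname{Proj}_{T_x\mathcal{M}}\nabla_x\tilde f(x,\mu)$, the orthogonal projection onto the tangent space $T_x\mathcal{M}$. *)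

From HB Require Import structures.
From mathcomp Require Import all_boot all_order all_algebra.
From mathcomp Require Import all_classical all_reals all_analysis.
Set Implicit Arguments. Unset Strict Implicit. Unset Printing Implicit Defensive.
Import Order.TTheory GRing.Theory Num.Theory.
Import numFieldNormedType.Exports.
Local Open Scope classical_set_scope.
Local Open Scope ring_scope.

Section Defs.
Variable R : realType.

(* Euclidean inner product and Euclidean norm on R^n
   (the library norm on 'rV is the max norm, so we do not use it). *)
Definition dotv n (u v : 'rV[R]_n) : R := (u *m v^T) 0 0.
Definition enorm n (u : 'rV[R]_n) : R := Num.sqrt (dotv u u).

Fixpoint dirn (V W : normedModType R) (vs : seq V) (f : V -> W) : V -> W :=
  match vs with
  | [::] => f
  | v :: vs' => fun x => 'D_v (dirn vs' f) x
  end.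

Definition smooth (V W : normedModType R) (f : V -> W) : Prop :=
  forall vs : seq V, continuous (dirn vs f) /\
    forall (v x : V), derivable (dirn vs f) x v.

Definition egrad n (g : 'rV[R]_n -> R) (x : 'rV[R]_n) : 'rV[R]_n :=
  \row_(i < n) 'D_(delta_mx 0 i) g x.

Definition C1 n (g : 'rV[R]_n -> R) : Prop :=
  (forall x, differentiable g x) /\ continuous (egrad g).

(* Embedded (smooth) submanifold of R^n of dimension d, via local defining
   functions: around each p in M there are an open U and a smooth
   F : R^n -> R^(n-d) with M /\ U = F^-1(0) /\ U and DF(x) of rank n-d on M /\ U. *)
Definition embedded_submanifold n (M : set 'rV[R]_n) : Prop :=
  exists d : nat, (d <= n)%N /\
  forall p, M p -> exists (U : set 'rV[R]_n) (F : 'rV[R]_n -> 'rV[R]_(n - d)),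
    [/\ open U, U p, smooth F,
        M `&` U = [set x | U x /\ F x = 0] &
        forall x, M x -> U x ->
          forall w : 'rV[R]_(n - d), exists v : 'rV[R]_n, 'D_v F x = w].

Definition curve_in n (M : set 'rV[R]_n) (x : 'rV[R]_n) (c : R -> 'rV[R]_n) :=
  [/\ smooth (c : R^o -> 'rV[R]_n), c 0 = x &
      exists2 e : R, 0 < e & forall t : R, `|t| < e -> M (c t)].

Definition tangent_space n (M : set 'rV[R]_n) (x : 'rV[R]_n) : set 'rV[R]_n :=
  [set v | exists c, curve_in M x c /\ derive1 (c : R^o -> _) 0 = v].

Definition proj_tangent n (M : set 'rV[R]_n) (x v : 'rV[R]_n) : 'rV[R]_n :=
  xget 0 [set p | tangent_space M x p /\
                  forall w, tangent_space M x w -> dotv (v - p) w = 0].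

Definition rgrad n (M : set 'rV[R]_n) (ft : 'rV[R]_n -> R -> R)
  (x : 'rV[R]_n) (mu : R) : 'rV[R]_n :=
  proj_tangent M x (egrad (ft^~ mu) x).

(* Riemannian distance induced on M: infimum of lengths of smooth curves
   gamma in M joining x to y (+oo if there is none). *)
Definition curve_length n (g : R -> 'rV[R]_n) : \bar R :=
  (\int[lebesgue_measure]_(t in `[0%R, 1%R]) (enorm (derive1 (g : R^o -> _) t))%:E)%E.

Definition riem_dist n (M : set 'rV[R]_n) (x y : 'rV[R]_n) : \bar R :=
  ereal_inf [set curve_length g | g in
    [set g : R -> 'rV[R]_n | smooth (g : R^o -> 'rV[R]_n) /\
       g 0 = x /\ g 1 = y /\ (forall t : R, 0 <= t <= 1 -> M (g t))]].

Definition riem_complete n (M : set 'rV[R]_n) : Prop :=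
  forall u : nat -> 'rV[R]_n, (forall k, M (u k)) ->
    (forall e : R, 0 < e -> exists N, forall k l, (N <= k)%N -> (N <= l)%N ->
        (riem_dist M (u k) (u l) < e%:E)%E) ->
    exists2 l, M l & forall e : R, 0 < e -> exists N, forall k, (N <= k)%N ->
        (riem_dist M (u k) l < e%:E)%E.

Definition smoothing_function n (f : 'rV[R]_n -> R) (ft : 'rV[R]_n -> R -> R) :=
  [/\ forall mu, 0 < mu -> C1 (ft^~ mu),
      forall x, (fun p : 'rV[R]_n * R => ft p.1 p.2)
                  @ filter_prod (nbhs x) (0^'+) --> f x &
      exists (kappa : R) (omega : R -> R),
        [/\ 0 < kappa, forall mu, 0 < mu -> 0 < omega mu,
            omega @ 0^'+ --> 0 &
            forall x mu, 0 < mu -> `|ft x mu - f x| <= kappa * omega mu]].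

Definition local_minimizer_on n (M : set 'rV[R]_n) (f : 'rV[R]_n -> R) (xs : 'rV[R]_n) :=
  M xs /\ \forall x \near xs, M x -> f xs <= f x.

Definition stationary_assoc n (M : set 'rV[R]_n) (ft : 'rV[R]_n -> R -> R) (xs : 'rV[R]_n) :=
  limf_einf (fun p : 'rV[R]_n * R => (enorm (rgrad M ft p.1 p.2))%:E)
            (filter_prod (within M (nbhs xs)) (0^'+)) = 0%E.

End Defs.

(* For mu > 0, minimize the penalized function [ft(., mu) + |. - xs|^2] over the
   compact set M /\ B[xs, r], with r so small that xs minimizes f there and M is
   there the zero set of a chart.  Comparing with the value at xs and using
   |ft - f| <= kappa omega(mu), the minimizer z satisfies
   |z - xs|^2 <= 2 kappa omega(mu); so z is interior, and differentiating along
   curves of M through z shows that grad ft(z, mu) + 2 (z - xs) is normal to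
   T_z M, whence |grad ft(z, mu)| <= 2 |z - xs|.  Both tend to 0 with mu. *)

From HB Require Import structures.
From mathcomp Require Import all_boot all_order all_algebra.
From mathcomp Require Import all_classical all_reals all_analysis.
From mathcomp Require Import ring lra.
Set Implicit Arguments. Unset Strict Implicit. Unset Printing Implicit Defensive.
Import Order.TTheory GRing.Theory Num.Theory.
Import numFieldNormedType.Exports.
Local Open Scope classical_set_scope.
Local Open Scope ring_scope.

Section Euclidean.
Variables (R : realType) (n : nat).
Implicit Types (u v w : 'rV[R]_n).

Lemma dotvE u v : dotv u v = \sum_(i < n) u 0 i * v 0 i.
Proof. by rewrite /dotv !mxE; apply: eq_bigr => i _; rewrite mxE. Qed.

Lemma dotvC u v : dotv u v = dotv v u.
Proof. by rewrite !dotvE; apply: eq_bigr => i _; rewrite mulrC. Qed.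

Lemma dotv0l v : dotv 0 v = 0.
Proof. by rewrite dotvE big1 // => i _; rewrite mxE mul0r. Qed.

Lemma dotvBl u v w : dotv (u - v) w = dotv u w - dotv v w.
Proof. by rewrite !dotvE -sumrB; apply: eq_bigr => i _; rewrite !mxE; ring. Qed.

Lemma dotv_sqrD u v : dotv (u + v) (u + v) = dotv u u + 2 * dotv u v + dotv v v.
Proof.
rewrite !dotvE mulr_sumr -!big_split /=; apply: eq_bigr => i _; rewrite !mxE; ring.
Qed.

Lemma dotvZZ (k : R) u : dotv (k *: u) (k *: u) = k ^+ 2 * dotv u u.
Proof. by rewrite !dotvE mulr_sumr; apply: eq_bigr => i _; rewrite !mxE; ring. Qed.

Lemma dotvv_ge0 u : 0 <= dotv u u.
Proof. by rewrite dotvE; apply: sumr_ge0 => i _; rewrite -expr2 sqr_ge0. Qed.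

(* [`|u|] is the max norm of the library, dominated by the Euclidean norm. *)
Lemma normr_lt_dotv u (eta : R) : 0 < eta -> dotv u u < eta ^+ 2 -> `|u| < eta.
Proof.
move=> eta_gt0 uu_lt; rewrite [`|u|]/Num.Def.normr /= mx_normrE.
apply: bigmax_lt => // -[i j] _ /=; rewrite (ord1 i).
have uj_le : `|u 0 j| ^+ 2 <= dotv u u.
  rewrite dotvE (bigD1 j) //= real_normK ?num_real // expr2 lerDl.
  by apply: sumr_ge0 => k _; rewrite -expr2 sqr_ge0.
have := normr_ge0 (u 0 j); nra.
Qed.

End Euclidean.

Section Calculus.
Variables (R : realType) (n : nat).
Implicit Types (a y : 'rV[R]_n) (c : R -> 'rV[R]_n).

Definition sqdist a y := dotv (y - a) (y - a).

Lemma sqdistxx a : sqdist a a = 0.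
Proof. by rewrite /sqdist subrr dotv0l. Qed.

Lemma sqdistE a y : sqdist a y = \sum_(i < n) (y 0 i - a 0 i) * (y 0 i - a 0 i).
Proof. by rewrite /sqdist dotvE; apply: eq_bigr => i _; rewrite !mxE. Qed.

Lemma continuous_sqdist a : continuous (sqdist a).
Proof.
move=> y; have -> : sqdist a = \sum_(i < n)
    (fun z : 'rV[R]_n => (z 0 i - a 0 i) * (z 0 i - a 0 i)).
  by apply/funext => z; rewrite fct_sumE sqdistE.
apply: (big_ind (fun h : 'rV[R]_n -> R => {for y, continuous h})).
- exact: cst_continuous.
- by move=> g h gy hy; exact: continuousD.
move=> i _.
have coord_y : {for y, continuous (fun z : 'rV[R]_n => z 0 i - a 0 i)}.
  apply: (@continuousB _ _ _ (fun z : 'rV[R]_n => z 0 i) (fun=> a 0 i)).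
    exact: coord_continuous.
  exact: cst_continuous.
exact: (@continuousM _ _ _ _ y coord_y coord_y).
Qed.

Lemma is_derive_egrad_comp (g : 'rV[R]_n -> R) c t :
  (forall x, differentiable g x) -> derivable c t 1 ->
  is_derive t 1 (g \o c) (dotv (egrad g (c t)) ('D_1 c t)).
Proof.
move=> dg dct; have dc : differentiable c t by apply/derivable1_diffP.
have dgc : differentiable (g \o c) t := differentiable_comp dc (dg _).
apply: DeriveDef; first by apply/derivable1_diffP.
rewrite deriveE // diff_comp // /=.
have -> : 'D_1 c t = 'd c t 1 by rewrite deriveE.
rewrite {1}(row_sum_delta ('d c t 1)) linear_sum dotvE; apply: eq_bigr => i _.
by rewrite linearZ /= mxE mulrC deriveE.
Qed.

Lemma is_derive_sqdist_comp a c t : derivable c t 1 ->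
  is_derive t 1 (sqdist a \o c) (dotv (2 *: (c t - a)) ('D_1 c t)).
Proof.
move=> dct.
have coord_derive i : is_derive t 1 (fun s => c s 0 i - a 0 i) ('D_1 c t 0 i).
  have /derivable_mxP/(_ 0 i) dci := dct.
  apply: DeriveDef; first exact: derivableB dci (derivable_cst _ _ _).
  by rewrite deriveB ?derive_cst ?subr0 // derive_mx // mxE.
have -> : sqdist a \o c =
    \sum_(i < n) (fun s => (c s 0 i - a 0 i) * (c s 0 i - a 0 i)).
  by apply/funext => s; rewrite fct_sumE /= sqdistE.
apply: is_derive_eq; rewrite dotvE; apply: eq_bigr => i _.
by rewrite !mxE /GRing.scale /=; ring.
Qed.

End Calculus.

Section FirstOrder.
Variables (R : realType) (n : nat) (M : set 'rV[R]_n).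
Implicit Types (a x : 'rV[R]_n) (c : R -> 'rV[R]_n).

Lemma curve_in_local_min (phi : 'rV[R]_n -> R) x c (r : R) : 0 < r ->
  (forall y, M y -> `|x - y| < r -> phi x <= phi y) -> curve_in M x c ->
  exists2 e : R, 0 < e & forall t, `|t| < e -> phi x <= phi (c t).
Proof.
move=> r_gt0 xmin [sc c0 [e e_gt0 cM]].
have /cvgrPdist_lt /(_ r r_gt0) := (sc [::]).1 (0 : R^o).
rewrite /= c0 => /nbhs_ballP [e' /= e'_gt0 c_near].
exists (Num.min e e'); first by rewrite lt_min e_gt0 e'_gt0.
move=> t; rewrite lt_min => /andP [te te'].
by apply: xmin; [exact: cM | apply: c_near; rewrite /ball /= sub0r normrN].
Qed.

Lemma penalized_local_min_orthogonal (g : 'rV[R]_n -> R) a x (r : R) :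
  (forall y, differentiable g y) -> 0 < r ->
  (forall y, M y -> `|x - y| < r -> g x + sqdist a x <= g y + sqdist a y) ->
  forall w, tangent_space M x w ->
    dotv (egrad g x) w + dotv (2 *: (x - a)) w = 0.
Proof.
move=> dg r_gt0 xmin w [c [cM <-]].
have [sc c0 _] := cM.
have dc t : derivable c t 1 by exact: (sc [::]).2 (1 : R^o) (t : R^o).
pose phi : R -> R := (g \o c) + (sqdist a \o c).
have dphi (t : R) : is_derive t (1 : R) phi (dotv (egrad g (c t)) ('D_1 c t) +
                                 dotv (2 *: (c t - a)) ('D_1 c t)).
  by apply: is_deriveD; [exact: is_derive_egrad_comp | exact: is_derive_sqdist_comp].
have [e e_gt0 phi_min] :=
  curve_in_local_min (phi := fun y => g y + sqdist a y) r_gt0 xmin cM.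
have : is_derive (0 : R) 1 phi 0.
  apply: (@derive1_at_min R phi (- e) e 0).
  - by rewrite ge0_cp // ltW.
  - by move=> t _; case: (dphi t).
  - by rewrite in_itv /= oppr_lt0 e_gt0.
  move=> t; rewrite in_itv /= -ltr_norml => /phi_min tmin.
  by rewrite -c0 in tmin; exact: tmin.
case=> _ phi'0; case: (dphi 0) => _ phi'0E; rewrite phi'0 c0 in phi'0E.
by rewrite derive1E -phi'0E.
Qed.

Lemma proj_tangent_dotv_le x (u b : 'rV[R]_n) :
  (forall w, tangent_space M x w -> dotv u w + dotv b w = 0) ->
  dotv (proj_tangent M x u) (proj_tangent M x u) <= dotv b b.
Proof.
move=> ub_orth; rewrite /proj_tangent; case: xgetP => [p _ [Tp p_orth] | _].
- have := p_orth p Tp; rewrite dotvBl => up; have := ub_orth p Tp.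
  have := dotvv_ge0 (p + b); rewrite dotv_sqrD (dotvC p b); lra.
- by rewrite dotv0l dotvv_ge0.
Qed.

End FirstOrder.

Lemma bounded_closed_ball_ (R : realType) (V : normedModType R) (x : V) (r : R) :
  [bounded y | y in closed_ball_ Num.norm x r].
Proof.
rewrite /bounded_near; near=> B => y /= xy_le.
rewrite -[y](subKr x) (le_trans (ler_normB _ _)) //.
apply: le_trans (lerD (lexx _) xy_le) _.
by near: B; apply: nbhs_pinfty_ge; rewrite num_real.
Unshelve. all: by end_near.
Qed.

Lemma nbhs_closed_ball_ (R : realType) (V : normedModType R) (x : V) (P : set V) :
  nbhs x P -> exists2 r : R, 0 < r & closed_ball_ Num.norm x r `<=` P.
Proof. by move=> /nbhs_closedballP [r rP]; exists r%:num => //; rewrite -closed_ballE. Qed.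

Lemma compact_slice_closed_ball (R : realType) (n : nat) (W : normedModType R)
    (M U : set 'rV[R]_n) (F : 'rV[R]_n -> W) (x : 'rV[R]_n) (r : R) :
  continuous F -> M `&` U = [set y | U y /\ F y = 0] ->
  closed_ball_ Num.norm x r `<=` U ->
  compact (M `&` closed_ball_ Num.norm x r).
Proof.
move=> Fc MU ballU.
have -> : M `&` closed_ball_ Num.norm x r =
    closed_ball_ Num.norm x r `&` F @^-1` [set 0].
  apply/seteqP; split => y.
  - move=> [My xy]; have : (M `&` U) y by split; last exact: ballU.
    by rewrite MU => -[_ Fy].
  - move=> [xy Fy]; have : [set y | U y /\ F y = 0] y by split; first exact: ballU.
    by rewrite -MU => -[].
apply: compact_closedI.
  by apply: bounded_closed_compact; [exact: bounded_closed_ball_ | exact: closed_closed_ball_].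
move/continuous_closedP : Fc; apply.
apply: accessible_closed_set1; apply: hausdorff_accessible; exact: norm_hausdorff.
Qed.

Section PenalizedMinimizer.
Variables (R : realType) (n : nat) (M : set 'rV[R]_n) (f g : 'rV[R]_n -> R).
Variables (x : 'rV[R]_n) (r e s : R).
Hypotheses (Mx : M x) (s_gt0 : 0 < s) (s_le_r : s <= r / 2).
Hypothesis compact_slice : compact (M `&` closed_ball_ Num.norm x r).
Hypothesis x_min : forall y, M y -> `|x - y| <= r -> f x <= f y.
Hypothesis g_diff : forall y, differentiable g y.
Hypothesis g_near_f : forall y, `|g y - f y| <= e.
Hypothesis e_small : 2 * e < s ^+ 2.

Let grad_proj z := proj_tangent M z (egrad g z).

Lemma penalized_minimizer_sqdist : exists z,
  [/\ M z, sqdist x z <= 2 * e & dotv (grad_proj z) (grad_proj z) <= 4 * sqdist x z].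
Proof.
pose G y := g y + sqdist x y.
have G_cont : continuous G.
  by move=> y; apply: continuousD; [exact: differentiable_continuous | exact: continuous_sqdist].
have r2_gt0 : 0 < r / 2 := lt_le_trans s_gt0 s_le_r.
have Kx : (M `&` closed_ball_ Num.norm x r) x.
  by split => //; rewrite /closed_ball_ /= subrr normr0; lra.
have [z /set_mem [Mz xz] z_min] :=
  compact_EVT_min (ex_intro _ x Kx) compact_slice (continuous_subspaceT G_cont).
have sqdist_le : sqdist x z <= 2 * e.
  have := z_min x (mem_set Kx); rewrite /G sqdistxx.
  have := x_min Mz xz; move: (g_near_f x) (g_near_f z).
  by rewrite !ler_norml => /andP [? ?] /andP [? ?]; lra.
exists z; split => //.
have xz_lt : `|x - z| < r / 2.
  rewrite distrC (lt_le_trans _ s_le_r) // normr_lt_dotv //.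
  exact: le_lt_trans sqdist_le e_small.
have -> : 4 * sqdist x z = dotv (2 *: (z - x)) (2 *: (z - x)).
  by rewrite dotvZZ /sqdist; congr (_ * _); rewrite expr2 -natrM.
apply: proj_tangent_dotv_le; apply: (@penalized_local_min_orthogonal _ _ _ _ _ _ (r / 2)) => //.
move=> y My zy; apply: (z_min y); apply/mem_set; split => //.
rewrite /closed_ball_ /= -[x - y](subrKA z) (le_trans (ler_normD _ _)) //.
by rewrite [r]splitr ltW // ltrD.
Qed.

Lemma penalized_minimizer : exists z,
  [/\ M z, `|x - z| < s & enorm (grad_proj z) < 2 * s].
Proof.
have [z [Mz z_sqdist z_grad]] := penalized_minimizer_sqdist.
have z_close : sqdist x z < s ^+ 2 := le_lt_trans z_sqdist e_small.
exists z; split => //; first by rewrite distrC normr_lt_dotv.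
rewrite /enorm -(@ltr_pXn2r _ 2) ?nnegrE ?sqrtr_ge0 ?mulr_ge0 ?(ltW s_gt0) //.
rewrite sqr_sqrtr ?dotvv_ge0 // (le_lt_trans z_grad) //.
by rewrite !expr2 in z_close *; nra.
Qed.

End PenalizedMinimizer.

Lemma limf_einf_within_prod_eq0 (R : realType) (V : normedModType R)
    (A : set V) (a : V) (h : V * R -> R) :
  (forall p, 0 <= h p) ->
  (forall eta, 0 < eta -> \forall mu \near 0^'+,
     exists2 x, A x & `|a - x| < eta /\ h (x, mu) < eta) ->
  limf_einf (fun p => (h p)%:E) (filter_prod (within A (nbhs a)) 0^'+) = 0%E.
Proof.
move=> h_ge0 h_small; rewrite limf_einfE; apply/eqP; rewrite eq_le; apply/andP; split.
- apply: ge_ereal_sup => _ [P [[B C] /= [FB FC] BC] <-].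
  apply/lee_addgt0Pr => eps eps_gt0; rewrite add0e.
  have /nbhs_ballP [r /= r_gt0 Br] := FB.
  have eta_gt0 : 0 < Num.min r eps by rewrite lt_min r_gt0 eps_gt0.
  have [mu [Cmu [x Ax [ax hx]]]] : exists mu, C mu /\
      exists2 x, A x & `|a - x| < Num.min r eps /\ h (x, mu) < Num.min r eps.
    by apply: (@filter_ex _ (0 : R)^'+); exact: filterI FC (h_small _ eta_gt0).
  have Bx : B x.
    apply: Br Ax; rewrite -ball_normE /= (lt_le_trans ax) //.
    by rewrite ge_min lexx.
  apply: le_trans (ereal_inf_lbound _) _; first by exists (x, mu) => //; exact: BC.
  by rewrite lee_fin ltW // (lt_le_trans hx) // ge_min lexx orbT.
- apply: le_trans (ereal_sup_ubound _); last by exists setT => //; exact: filterT.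
  by apply: le_ereal_inf_tmp => _ [p _ <-]; rewrite lee_fin.
Qed.

Theorem proposition3p6 (R : realType) (n : nat) (M : set 'rV[R]_n)
  (f : 'rV[R]_n -> R) (ft : 'rV[R]_n -> R -> R) (xs : 'rV[R]_n) :
  embedded_submanifold M ->
  riem_complete M ->
  lower_semicontinuous (fun x => (f x)%:E) ->
  smoothing_function f ft ->
  local_minimizer_on M f xs ->
  stationary_assoc M ft xs.
Proof.
move=> [d [_ chart]] _ _ [ft_C1 _ [kappa [omega [kappa_gt0 _ omega_cvg ft_near_f]]]].
move=> [Mxs xs_min]; have [U [F [U_open Uxs F_smooth MU _]]] := chart xs Mxs.
have [r r_gt0 ball_sub] :=
  nbhs_closed_ball_ (filterI xs_min (open_nbhs_nbhs (conj U_open Uxs))).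
have slice_compact : compact (M `&` closed_ball_ Num.norm xs r).
  by apply: compact_slice_closed_ball (F_smooth [::]).1 MU _ => y /ball_sub [].
apply: limf_einf_within_prod_eq0 => [p | eta eta_gt0]; first exact: sqrtr_ge0.
pose s := Num.min (r / 2) (eta / 2).
have s_gt0 : 0 < s by rewrite lt_min !divr_gt0.
have s2_gt0 : 0 < s ^+ 2 / (2 * kappa) by rewrite divr_gt0 ?exprn_gt0 ?mulr_gt0.
near=> mu.
have mu_gt0 : 0 < mu by near: mu; exact: nbhs_right_gt.
have omega_small : 2 * (kappa * omega mu) < s ^+ 2.
  have : `|0 - omega mu| < s ^+ 2 / (2 * kappa) by near: mu; exact: cvgr_dist_lt.
  rewrite sub0r normrN => /(le_lt_trans (ler_norm _)).
  by rewrite ltr_pdivlMr ?mulr_gt0 //; nra.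
have s_le_r : s <= r / 2 by rewrite /s ge_min lexx.
have [z [Mz xz z_grad]] := penalized_minimizer Mxs s_gt0 s_le_r slice_compact
  (fun y My xy => (ball_sub y xy).1 My) (ft_C1 mu mu_gt0).1
  (fun y => ft_near_f y mu mu_gt0) omega_small.
have s_le_eta : s <= eta / 2 by rewrite /s ge_min lexx orbT.
by exists z => //; split; lra.
Unshelve. all: by end_near.
Qed.
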